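(* Let $A$ be a real $n\times n$ matrix with strictly negative diagonal entries such that all $2\times2$ and all $3\times3$ principal minors of $A$ vanish. Then $G_A$ is the complete graph, $A$ is a bipartite matrix, and $\operatorname{rank}A=1$.
   Context: The connectivity graph $G_A$ is the simple graph on $\{1,\dots,n\}$ containing edge $(ij)$, $i\ne j$, unless $A_{ij}=A_{ji}=0$. A principal minor is the determinant of a principal submatrix $A_\sigma$ (rows and columns indexed by $\sigma$). A real $n\times n$ matrix $A$ is bipartite if $\{1,\dots,n\}$ can be partitioned into disjoint sets $\sigma,\bar\sigma$ such that: if $i\in\sigma,j\in\bar\sigma$ then $A_{ij}\ge0$ and $A_{ji}\ge0$; and if $i,j\in\sigma$ or $i,j\in\bar\sigma$ then $A_{ij}\le0$ and $A_{ji}\le0$. *)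

From HB Require Import structures.
From mathcomp Require Import all_boot all_order all_algebra.
Set Implicit Arguments. Unset Strict Implicit. Unset Printing Implicit Defensive.
Import Order.TTheory GRing.Theory Num.Theory.
Local Open Scope ring_scope.

(* Principal submatrix A_sigma: rows and columns indexed by sigma, both
   enumerated in the same (increasing) order. *)
Definition principal_submx (R : ringType) (n : nat) (A : 'M[R]_n)
    (sigma : {set 'I_n}) : 'M[R]_#|sigma| :=
  \matrix_(i, j) A (enum_val i) (enum_val j).

Definition principal_minor (R : comRingType) (n : nat) (A : 'M[R]_n)
    (sigma : {set 'I_n}) : R :=
  \det (principal_submx A sigma).

Definition conn_edge (R : ringType) (n : nat) (A : 'M[R]_n) : rel 'I_n :=
  fun i j => (i != j) && ~~ ((A i j == 0) && (A j i == 0)).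

Definition conn_graph_complete (R : ringType) (n : nat) (A : 'M[R]_n) : Prop :=
  forall i j : 'I_n, i != j -> conn_edge A i j.

Definition bipartite_matrix (R : numDomainType) (n : nat) (A : 'M[R]_n) : Prop :=
  exists sigma : {set 'I_n},
    (forall i j : 'I_n, i \in sigma -> j \notin sigma ->
        0 <= A i j /\ 0 <= A j i) /\
    (forall i j : 'I_n, (i \in sigma) = (j \in sigma) ->
        A i j <= 0 /\ A j i <= 0).

From HB Require Import structures.
From mathcomp Require Import all_boot all_order all_algebra.
From mathcomp Require Import perm ring.
Set Implicit Arguments.
Unset Strict Implicit.
Unset Printing Implicit Defensive.

(* The 2x2 minors give A_ij A_ji = A_ii A_jj, so no entry of A vanishes, and
   together with the 3x3 minors they force every 3-cycle product
   A_ij A_jk A_ki to equal A_ii A_jj A_kk.  Hence A_ij A_ki = A_ii A_kj for a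
   fixed k: every row is a multiple of row k, so A has rank one, and A_ij < 0
   exactly when A_ki and A_kj have the same sign, which gives the bipartition
   sigma = {i | A_ki < 0}. *)

Import Order.TTheory GRing.Theory Num.Theory.
Local Open Scope ring_scope.

Lemma det_mx2 (R : comNzRingType) (M : 'M[R]_2) :
  \det M = M 0 0 * M 1 1 - M 0 1 * M 1 0.
Proof.
rewrite (expand_det_row _ 0) !big_ord_recl big_ord0 /cofactor !det_mx11 !mxE.
have -> : lift 0 0 = 1 :> 'I_2 by apply/val_inj.
have -> : lift 1 0 = 0 :> 'I_2 by apply/val_inj.
rewrite /= expr0 expr1; ring.
Qed.

Lemma det_mx3 (R : comNzRingType) (M : 'M[R]_3) :
  \det M = M 0 0 * (M 1 1 * M 2 2 - M 1 2 * M 2 1)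
         - M 0 1 * (M 1 0 * M 2 2 - M 1 2 * M 2 0)
         + M 0 2 * (M 1 0 * M 2 1 - M 1 1 * M 2 0).
Proof.
rewrite (expand_det_row _ 0) !big_ord_recl big_ord0 /cofactor !det_mx2 !mxE.
have -> : lift 0 0 = 1 :> 'I_3 by apply/val_inj.
have -> : lift 0 1 = 2 :> 'I_3 by apply/val_inj.
have -> : lift 1 0 = 0 :> 'I_3 by apply/val_inj.
have -> : lift 1 1 = 2 :> 'I_3 by apply/val_inj.
have -> : lift 0 0 = 1 :> 'I_2 by apply/val_inj.
have -> : lift ord0 1 = 2 :> 'I_3 by apply/val_inj.
have -> : lift 2 0 = 0 :> 'I_3 by apply/val_inj.
have -> : lift 2 1 = 1 :> 'I_3 by apply/val_inj.
rewrite /= !expr0 !expr1 expr2; ring.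
Qed.

Lemma det_conj_perm (R : comNzRingType) (k : nat) (M : 'M[R]_k) (p : 'S_k) :
  \det (\matrix_(a, b) M (p a) (p b)) = \det M.
Proof.
have -> : \matrix_(a, b) M (p a) (p b) = row_perm p (col_perm p M).
  by apply/matrixP => a b; rewrite !mxE.
rewrite row_permE col_permE !det_mulmx !det_perm odd_permV mulrCA.
by rewrite -signr_addb addbb mulr1.
Qed.

Lemma principal_minor_reindex (R : comNzRingType) (n k : nat) (A : 'M[R]_n)
    (s : {set 'I_n}) (g : 'I_k -> 'I_n) :
  #|s| = k -> injective g -> (forall a, g a \in s) ->
  principal_minor A s = \det (\matrix_(a, b) A (g a) (g b)).
Proof.
move=> card_s; case: k / card_s g => g g_inj g_in.
pose f a := enum_rank_in (g_in a) (g a).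
have f_inj : injective f.
  by move=> a b /enum_rank_in_inj-/(_ (g_in a) (g_in b)) /g_inj.
rewrite /principal_minor -(det_conj_perm _ (perm f_inj)); congr (\det _).
by apply/matrixP => a b; rewrite !mxE !permE /f !(enum_rankK_in _ (g_in _)).
Qed.

Lemma principal_minor_tuple (R : comNzRingType) (n k : nat) (A : 'M[R]_n)
    (t : k.-tuple 'I_n) :
  uniq t ->
  principal_minor A [set x in t] = \det (\matrix_(a, b) A (tnth t a) (tnth t b)).
Proof.
move=> t_uniq; apply: principal_minor_reindex; last by move=> a; rewrite inE mem_tnth.
  by rewrite cardsE (card_uniqP t_uniq) size_tuple.
exact/tuple_uniqP.
Qed.

Lemma principal_minor2 (R : comNzRingType) (n : nat) (A : 'M[R]_n) (i j : 'I_n) :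
  i != j -> principal_minor A [set i; j] = A i i * A j j - A i j * A j i.
Proof.
move=> ij; have -> : [set i; j] = [set x in [tuple i; j]] by apply/setP => x; rewrite !inE.
by rewrite principal_minor_tuple ?det_mx2 ?mxE //= inE andbT.
Qed.

Lemma principal_minor3 (R : comNzRingType) (n : nat) (A : 'M[R]_n) (i j k : 'I_n) :
  uniq [:: i; j; k] ->
  principal_minor A [set i; j; k] =
    A i i * (A j j * A k k - A j k * A k j)
  - A i j * (A j i * A k k - A j k * A k i)
  + A i k * (A j i * A k j - A j j * A k i).
Proof.
move=> ijk; have -> : [set i; j; k] = [set x in [tuple i; j; k]].
  by apply/setP => x; rewrite !inE orbA.
by rewrite principal_minor_tuple ?det_mx3 ?mxE.
Qed.

Lemma eq_double_root (R : idomainType) (x y c : R) :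
  (x - c) + (y - c) = 0 -> x * y = c ^+ 2 -> x = c /\ y = c.
Proof.
move=> sum_eq0 prod_eq.
have : (x - c) * (y - c) = 0.
  have -> : (x - c) * (y - c) = x * y - c ^+ 2 - c * ((x - c) + (y - c)) by ring.
  by rewrite sum_eq0 prod_eq subrr mulr0 subr0.
move/eqP; rewrite mulf_eq0 !subr_eq0 => /orP[/eqP xc|/eqP yc].
  by move: sum_eq0; rewrite xc subrr add0r => /subr0_eq ->.
by move: sum_eq0; rewrite yc subrr addr0 => /subr0_eq ->.
Qed.

Section VanishingMinors.

Variables (R : realFieldType) (n : nat) (A : 'M[R]_n).
Hypothesis diag_lt0 : forall i : 'I_n, A i i < 0.
Hypothesis minors_eq0 : forall sigma : {set 'I_n},
  (#|sigma| = 2)%N \/ (#|sigma| = 3)%N -> principal_minor A sigma = 0.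

Lemma diag_neq0 (i : 'I_n) : A i i != 0.
Proof. exact: ltr0_neq0. Qed.

Lemma mul_entry_transpose (i j : 'I_n) : A i j * A j i = A i i * A j j.
Proof.
have [<-|ij] := eqVneq i j; first by [].
apply/eqP; rewrite eq_sym -subr_eq0 -principal_minor2 //.
by apply/eqP/minors_eq0; left; rewrite cards2 ij.
Qed.

Lemma entry_neq0 (i j : 'I_n) : A i j != 0.
Proof.
apply/eqP => Aij0; have := mulf_neq0 (diag_neq0 i) (diag_neq0 j).
by rewrite -mul_entry_transpose Aij0 mul0r eqxx.
Qed.

(* The two cycle products [x] and [y] of a 3x3 principal minor are roots of
   [(t - c)^2] with [c] the product of its diagonal: the 2x2 minors give
   [x y = c^2], and then the vanishing 3x3 minor reads [x + y = 2 c]. *)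
Lemma cycle_product (i j k : 'I_n) :
  A i j * A j k * A k i = A i i * A j j * A k k.
Proof.
have [<-|ij] := eqVneq i j; first by rewrite -mulrA mul_entry_transpose mulrA.
have [<-|ik] := eqVneq i k; first by rewrite mul_entry_transpose mulrAC.
have [<-|jk] := eqVneq j k; first by rewrite mulrAC mul_entry_transpose mulrAC.
have ijk : uniq [:: i; j; k] by rewrite /= !inE negb_or ij ik jk.
have minor3_eq0 : principal_minor A [set i; j; k] = 0.
  apply: minors_eq0; right.
  have -> : [set i; j; k] = [set x in [:: i; j; k]].
    by apply/setP => x; rewrite !inE orbA.
  by rewrite cardsE (card_uniqP ijk).
rewrite principal_minor3 // in minor3_eq0.
suff [] : A i j * A j k * A k i = A i i * A j j * A k k /\
          A i k * A k j * A j i = A i i * A j j * A k k by [].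
apply: eq_double_root.
  set minor := (X in X = 0) in minor3_eq0.
  have -> : A i j * A j k * A k i - A i i * A j j * A k k
          + (A i k * A k j * A j i - A i i * A j j * A k k) =
      minor + A i i * (A j k * A k j - A j j * A k k)
            + A j j * (A k i * A i k - A k k * A i i)
            + A k k * (A i j * A j i - A i i * A j j) by rewrite /minor; ring.
  by rewrite minor3_eq0 !mul_entry_transpose !subrr !mulr0 !addr0.
have -> : A i j * A j k * A k i * (A i k * A k j * A j i) =
          (A i j * A j i) * (A j k * A k j) * (A k i * A i k) by ring.
rewrite !mul_entry_transpose; ring.
Qed.

Lemma entry_rank_one (k i j : 'I_n) : A i j * A k i = A i i * A k j.
Proof.
apply: (mulIf (mulf_neq0 (diag_neq0 j) (diag_neq0 k))).
transitivity (A i j * A j k * A k i * A k j).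
  by rewrite -(mul_entry_transpose j k); ring.
by rewrite cycle_product; ring.
Qed.

Lemma entry_lt0 (k i j : 'I_n) : (A i j < 0) = ((A k i < 0) == (A k j < 0)).
Proof.
have := congr1 (fun x => x < 0) (entry_rank_one k i j).
rewrite /= !mulr_lt0 !entry_neq0 diag_lt0 /=.
by case: (A i j < 0); case: (A k i < 0); case: (A k j < 0).
Qed.

Lemma conn_graph_completeA : conn_graph_complete A.
Proof. by move=> i j ij; rewrite /conn_edge ij (negbTE (entry_neq0 i j)). Qed.

Lemma bipartite_matrixA (k : 'I_n) : bipartite_matrix A.
Proof.
exists [set i | A k i < 0]; split=> i j; rewrite !inE.
  by move=> ki kj; rewrite !leNgt (entry_lt0 k i j) (entry_lt0 k j i) ki (negbTE kj).
by move=> kij; split; apply: ltW; rewrite (entry_lt0 k) kij.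
Qed.

Lemma mxrankA_eq1 (k : 'I_n) : \rank A = 1%N.
Proof.
have -> : A = \col_i (A i i / A k i) *m \row_j A k j.
  apply/matrixP => i j; rewrite !mxE big_ord1 !mxE.
  by apply: (mulIf (entry_neq0 k i)); rewrite mulrAC divfK ?entry_rank_one ?entry_neq0.
apply/eqP; rewrite eqn_leq (leq_trans (mxrankM_maxl _ _) (rank_leq_col _)) /=.
rewrite lt0n mxrank_eq0; apply/eqP => /matrixP /(_ k k).
by rewrite !mxE big_ord1 !mxE; apply/eqP; rewrite !mulf_neq0 ?invr_neq0 ?entry_neq0.
Qed.

End VanishingMinors.

Theorem mainTheorem10 (R : realFieldType) (n : nat) (A : 'M[R]_n)
  (hn : (0 < n)%N)
  (hdiag : forall i : 'I_n, A i i < 0)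
  (hminors : forall sigma : {set 'I_n},
      (#|sigma| = 2)%N \/ (#|sigma| = 3)%N -> principal_minor A sigma = 0) :
  conn_graph_complete A /\ bipartite_matrix A /\ \rank A = 1%N.
Proof.
have k := Ordinal hn.
split; first exact: conn_graph_completeA hdiag hminors.
by split; [exact: bipartite_matrixA hdiag hminors k | exact: mxrankA_eq1 hdiag hminors k].
Qed.
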